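(* Let $S\ni h$ be a polarized lattice, $\Delta$ a Weyl chamber for $\operatorname{rt}(S,h)$, $e_1,e_2\in\mathfrak{b}(\Delta)$ distinct exceptional divisors, and $l_1,l_2\in\operatorname{Fn}_\Delta(S,h)$ distinct lines. Then: (1) if $S\ni h$ is $2$-admissible, then $l_1\cdot l_2\in\{0,1\}$; (2) if $S\ni h$ is $1$-admissible, then $l_1\cdot e_1\in\{0,1\}$; (3) always $e_1\cdot e_2\in\{0,1\}$.
   Context: All lattices even; $(S,h)$ polarized means $S$ hyperbolic, $h^2>0$. $\operatorname{root}_n(S,h)=\{r: r^2=-2,\ r\cdot h=n\}$; $\operatorname{rt}(S,h)$ is spanned by $\operatorname{root}_0(S,h)$. A Weyl chamber $\Delta$ has positive roots $P_\Delta$ and simple roots $\mathfrak{b}(\Delta)$ (exceptional divisors). Lines: $\operatorname{Fn}_\Delta(S,h)=\{l\in\operatorname{root}_1(S,h): l\cdot e\ge0\ \forall e\in\mathfrak{b}(\Delta)\}$. A vector $w$ is $m$-isotropic if $w^2=0$, $w\cdot h=m$. $S\ni h$ is $1$-admissible if it has no $1$-isotropic vector, and $2$-admissible if $h^2\ge4$ and it has neither $1$- nor $2$-isotropic vectors. *)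

From HB Require Import structures.
From mathcomp Require Import all_boot all_order all_algebra.
Set Implicit Arguments. Unset Strict Implicit. Unset Printing Implicit Defensive.
Import Order.TTheory GRing.Theory Num.Theory.
Local Open Scope ring_scope.

(* A lattice of rank n is Z^n (row vectors 'rV[int]_n) with the bilinear bform
   given by an integral Gram matrix G:  x.y = x G y^T. *)
Definition bform (n : nat) (G : 'M[int]_n) (x y : 'rV[int]_n) : int :=
  (x *m G *m y^T) ord0 ord0.

Definition bformQ (n : nat) (G : 'M[int]_n) (x : 'rV[rat]_n) (y : 'rV[int]_n) : rat :=
  (x *m map_mx intr G *m (map_mx intr y)^T) ord0 ord0.

(* even lattice: symmetric integral bform with even diagonal (x^2 even for all x) *)
Definition even_lattice (n : nat) (G : 'M[int]_n) : Prop :=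
  G^T = G /\ forall i : 'I_n, (2 %| G i i)%Z.

(* hyperbolic: nondegenerate of signature (1, n-1) (Sylvester diagonalisation
   over Q: some invertible rational base change gives diag(+,-,...,-)). *)
Definition hyperbolic (n : nat) (G : 'M[int]_n) : Prop :=
  (0 < n)%N /\
  exists P : 'M[rat]_n, P \in unitmx /\
    let D := P *m map_mx intr G *m P^T in
    (forall i j : 'I_n, i != j -> D i j = 0) /\
    (forall i : 'I_n, ((nat_of_ord i == 0%N) -> 0 < D i i) /\
                      ((nat_of_ord i != 0%N) -> D i i < 0)).

Definition polarized (n : nat) (G : 'M[int]_n) (h : 'rV[int]_n) : Prop :=
  even_lattice G /\ hyperbolic G /\ 0 < bform G h h.

Definition is_root (n : nat) (G : 'M[int]_n) (h : 'rV[int]_n) (k : int)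
  (r : 'rV[int]_n) : Prop :=
  bform G r r = -2 /\ bform G r h = k.

(* A Weyl chamber of the root system root_0(S,h) (in rt(S,h) (x) R) is a
   connected component of the complement of the hyperplanes r^perp; it is
   represented by any rational point rho lying in it (only the pairings of
   rho with roots matter). *)
Definition weyl_chamber (n : nat) (G : 'M[int]_n) (h : 'rV[int]_n)
  (rho : 'rV[rat]_n) : Prop :=
  forall r, is_root G h 0 r -> bformQ G rho r != 0.

Definition pos_root (n : nat) (G : 'M[int]_n) (h : 'rV[int]_n)
  (rho : 'rV[rat]_n) (r : 'rV[int]_n) : Prop :=
  is_root G h 0 r /\ 0 < bformQ G rho r.

(* b(Delta): simple roots = positive roots whose hyperplane is a wall of the
   chamber, i.e. e^perp contains a point of the closure of Delta at which all
   other positive roots are strictly positive. *)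
Definition exceptional (n : nat) (G : 'M[int]_n) (h : 'rV[int]_n)
  (rho : 'rV[rat]_n) (e : 'rV[int]_n) : Prop :=
  pos_root G h rho e /\
  exists x : 'rV[rat]_n, bformQ G x e = 0 /\
    forall r, pos_root G h rho r -> r <> e -> 0 < bformQ G x r.

Definition is_line (n : nat) (G : 'M[int]_n) (h : 'rV[int]_n)
  (rho : 'rV[rat]_n) (l : 'rV[int]_n) : Prop :=
  is_root G h 1 l /\ forall e, exceptional G h rho e -> 0 <= bform G l e.

Definition isotropic (n : nat) (G : 'M[int]_n) (h : 'rV[int]_n) (m : int)
  (w : 'rV[int]_n) : Prop :=
  bform G w w = 0 /\ bform G w h = m.

Definition one_admissible (n : nat) (G : 'M[int]_n) (h : 'rV[int]_n) : Prop :=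
  forall w, ~ isotropic G h 1 w.

Definition two_admissible (n : nat) (G : 'M[int]_n) (h : 'rV[int]_n) : Prop :=
  4 <= bform G h h /\ forall w, ~ isotropic G h 1 w /\ ~ isotropic G h 2 w.

From mathcomp Require Import all_boot all_order all_algebra.
From Stdlib Require Import Classical.
From mathcomp Require Import ring lra zify.
Set Implicit Arguments. Unset Strict Implicit. Unset Printing Implicit Defensive.
Import Order.TTheory GRing.Theory Num.Theory.
Local Open Scope ring_scope.

(* The engine is the Hodge index theorem: the form is negative definite on h^perp.
   For (-2)-vectors a <> b of equal degree it forces a.b >= -1, since otherwise
   (a - b)^2 >= 0 with a - b in h^perp; and if a.b = -1 then a - b or b - a is a
   positive root.  That cannot happen for two exceptional divisors, because a
   simple root is not a sum of two positive roots, nor for two lines, because a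
   line pairs nonnegatively with every positive root (induction on the height
   rho.r: a positive root that is not a sum of two smaller ones is simple).
   From above, Cauchy-Schwarz (a + b)^2 h^2 <= ((a + b).h)^2 gives a.b <= 2, and
   a.b = 2 makes a + b an isotropic vector of degree (a + b).h, which the
   admissibility hypotheses exclude (for degree 0, Hodge index gives a + b = 0). *)

Section MatrixForm.

Variables (R : comNzRingType) (n : nat) (M : 'M[R]_n).

Definition mxform (a b : 'rV[R]_n) : R := (a *m M *m b^T) 0 0.

Lemma mxformDl a b c : mxform (a + b) c = mxform a c + mxform b c.
Proof. by rewrite /mxform !mulmxDl mxE. Qed.

Lemma mxformZl k a c : mxform (k *: a) c = k * mxform a c.
Proof. by rewrite /mxform -!scalemxAl mxE. Qed.

Lemma mxformBl a b c : mxform (a - b) c = mxform a c - mxform b c.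
Proof. by rewrite mxformDl -scaleN1r mxformZl mulN1r. Qed.

Lemma mxformDr a b c : mxform c (a + b) = mxform c a + mxform c b.
Proof. by rewrite /mxform linearD mulmxDr mxE. Qed.

Lemma mxformZr k a c : mxform c (k *: a) = k * mxform c a.
Proof. by rewrite /mxform linearZ -scalemxAr mxE. Qed.

Lemma mxformBr a b c : mxform c (a - b) = mxform c a - mxform c b.
Proof. by rewrite mxformDr -scaleN1r mxformZr mulN1r. Qed.

Hypothesis symM : M^T = M.

Lemma mxformC a b : mxform a b = mxform b a.
Proof.
have tr11 (A : 'M[R]_1) : A^T 0 0 = A 0 0 by rewrite mxE.
by rewrite /mxform -tr11 !trmx_mul trmxK symM mulmxA.
Qed.

Lemma mxform_sqrD a b :
  mxform (a + b) (a + b) = mxform a a + 2 * mxform a b + mxform b b.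
Proof. rewrite !(mxformDl, mxformDr) (mxformC b a); ring. Qed.

Lemma mxform_sqrB a b :
  mxform (a - b) (a - b) = mxform a a - 2 * mxform a b + mxform b b.
Proof. rewrite !(mxformBl, mxformBr) (mxformC b a); ring. Qed.

End MatrixForm.

Section HodgeIndex.

Variables (n : nat) (M P : 'M[rat]_n) (i0 : 'I_n).
Hypotheses (symM : M^T = M) (unitP : P \in unitmx).
Local Notation D := (P *m M *m P^T).
Local Notation coord a := (a *m invmx P).
Hypothesis diagD : forall i j, i != j -> D i j = 0.
Hypothesis negD : forall i, i != i0 -> D i i < 0.

Lemma mxform_diagE a b :
  mxform M a b = \sum_i coord a 0 i * D i i * coord b 0 i.
Proof.
have coordK (c : 'rV[rat]_n) : c = coord c *m P by rewrite mulmxKV.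
rewrite /mxform {1}(coordK a) {1}(coordK b) trmx_mul.
have -> : coord a *m P *m M *m (P^T *m (coord b)^T) = coord a *m D *m (coord b)^T.
  by rewrite !mulmxA.
rewrite mxE; apply: eq_bigr => j _; congr (_ * _); last by rewrite mxE.
by rewrite mxE (bigD1 j) //= big1 ?addr0 // => k /diagD->; rewrite mulr0.
Qed.

Lemma mxform_neg_def a : coord a 0 i0 = 0 ->
  mxform M a a <= 0 /\ (mxform M a a = 0 -> a = 0).
Proof.
move=> a_i0.
have term_le0 i : coord a 0 i * D i i * coord a 0 i <= 0.
  have [->|ne] := eqVneq i i0; first by rewrite a_i0 !mul0r.
  by rewrite mulrAC -expr2 mulr_ge0_le0 ?sqr_ge0 // ltW ?negD.
rewrite mxform_diagE; split=> [|sum0]; first exact: sumr_le0.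
suff /(congr1 (mulmx^~ P)) : coord a = 0 by rewrite mulmxKV // mul0mx.
apply/rowP => i; rewrite [RHS]mxE; have [->//|ne] := eqVneq i i0.
have nterm_ge0 j : true -> 0 <= - (coord a 0 j * D j j * coord a 0 j).
  by rewrite oppr_ge0.
have nsum0 : \sum_j - (coord a 0 j * D j j * coord a 0 j) = 0.
  by rewrite sumrN sum0 oppr0.
have /eqP := psumr_eq0P nterm_ge0 nsum0 (i := i) isT.
rewrite oppr_eq0 mulrAC -expr2 mulf_eq0 sqrf_eq0 (lt_eqF (negD ne)) orbF.
by move/eqP.
Qed.

Lemma hodge_index h v : 0 < mxform M h h -> mxform M v h = 0 ->
  mxform M v v <= 0 /\ (mxform M v v = 0 -> v = 0).
Proof.
move=> h_pos vh0.
set u := coord h 0 i0; set s := coord v 0 i0.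
have u_neq0 : u != 0.
  by apply/eqP => /mxform_neg_def[h_le0 _]; rewrite (le_gtF h_le0) in h_pos.
set y := u *: v - s *: h.
have y_i0 : coord y 0 i0 = 0.
  by rewrite /y mulmxBl -!scalemxAl !mxE /u /s !mxE mulrC subrr.
have yy : mxform M y y = u ^+ 2 * mxform M v v + s ^+ 2 * mxform M h h.
  rewrite /y mxform_sqrB // !(mxformZl, mxformZr) vh0; ring.
have [] := mxform_neg_def y_i0; rewrite yy => y_le0 y_eq0.
have u2_gt0 : 0 < u ^+ 2 by rewrite exprn_even_gt0.
have s2_ge0 : 0 <= s ^+ 2 by exact: sqr_ge0.
have vv_le0 : mxform M v v <= 0 by nra.
split=> // vv0.
have s0 : s = 0 by apply/eqP; rewrite -sqrf_eq0; apply/eqP; nra.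
have /eqP : y = 0 by apply: y_eq0; rewrite vv0 s0; ring.
by rewrite /y s0 scale0r subr0 scaler_eq0 (negPf u_neq0) => /eqP.
Qed.

End HodgeIndex.

Local Notation toQ A := (map_mx (intr : int -> rat) A).

Lemma bformE n (G : 'M[int]_n) : bform G = mxform G.
Proof. by []. Qed.

Lemma bform_ratE n (G : 'M[int]_n) x y :
  (bform G x y)%:~R = mxform (toQ G) (toQ x) (toQ y) :> rat.
Proof. by rewrite /bform /mxform map_trmx -!map_mxM [RHS]mxE. Qed.

Section RationalPairing.

Variables (n : nat) (G : 'M[int]_n) (rho : 'rV[rat]_n).

Lemma bformQE x y : bformQ G x y = mxform (toQ G) x (toQ y).
Proof. by []. Qed.

Lemma bformQDr a b : bformQ G rho (a + b) = bformQ G rho a + bformQ G rho b.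
Proof. by rewrite !bformQE map_mxD mxformDr. Qed.

Lemma bformQBr a b : bformQ G rho (a - b) = bformQ G rho a - bformQ G rho b.
Proof. by rewrite !bformQE map_mxB mxformBr. Qed.

Lemma bformQNr a : bformQ G rho (- a) = - bformQ G rho a.
Proof. by rewrite !bformQE map_mxN -scaleN1r mxformZr mulN1r. Qed.

Lemma bformQ_shift t r r' :
  bformQ G (rho + t *: toQ r) r' = bformQ G rho r' + t * (bform G r r')%:~R.
Proof. by rewrite !bformQE mxformDl mxformZl bform_ratE. Qed.

(* Clearing the denominators of the entries of rho *m G. *)
Lemma bformQ_denom : exists2 N : int, 0 < N &
  exists m : 'rV[int]_n -> int, forall r, N%:~R * bformQ G rho r = (m r)%:~R.
Proof.
set c := rho *m toQ G.
exists (\prod_j denq (c 0 j)); first by apply: prodr_gt0 => j _; exact: denq_gt0.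
exists (fun r => \sum_j (\prod_(k | k != j) denq (c 0 k)) * numq (c 0 j) * r 0 j).
move=> r; rewrite /bformQ mxE mulr_sumr rmorph_sum; apply: eq_bigr => j _.
have -> : (toQ r)^T j 0 = (r 0 j)%:~R by rewrite !mxE.
rewrite !rmorphM /= numqE (bigD1 j) //= rmorphM /=; ring.
Qed.

Lemma bformQ_pos_ind (P : 'rV[int]_n -> Prop) :
  (forall r, 0 < bformQ G rho r ->
     (forall r', 0 < bformQ G rho r' < bformQ G rho r -> P r') -> P r) ->
  forall r, 0 < bformQ G rho r -> P r.
Proof.
move=> IH r r_gt0.
have [N N_gt0 [m mE]] := bformQ_denom.
have m_gt0 a : (0 < bformQ G rho a) = (0 < m a).
  by rewrite -(ltr_int rat) -mE pmulr_rgt0 ?ltr0z.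
have m_lt a b : (bformQ G rho a < bformQ G rho b) = (m a < m b).
  by rewrite -(ltr_int rat) -!mE ltr_pM2l ?ltr0z.
suff ind k : forall r, 0 < bformQ G rho r -> m r <= k%:R -> P r.
  by apply: (ind `|m r|%N) => //; lia.
elim: k => [|k IHk] {}r {}r_gt0; rewrite m_gt0 in r_gt0; first lia.
move=> r_le; apply: IH; first by rewrite m_gt0.
move=> r' /andP[]; rewrite m_gt0 m_lt => r'_gt0 lt.
by apply: IHk; [rewrite m_gt0 | lia].
Qed.

End RationalPairing.

Section PolarizedLattice.

Variables (n : nat) (G : 'M[int]_n) (h : 'rV[int]_n).
Hypothesis polGh : polarized G h.

Lemma polarized_sym : G^T = G.
Proof. by case: polGh => [[]]. Qed.

Let symG := polarized_sym.

Lemma polarized_gt0 : 0 < bform G h h.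
Proof. by case: polGh => _ []. Qed.

Lemma polarized_hodge_index v : bform G v h = 0 ->
  bform G v v <= 0 /\ (bform G v v = 0 -> v = 0).
Proof.
move=> vh0; have [_ [[n_gt0 [P [unitP [diagD negD]]]] hh_gt0]] := polGh.
pose i0 : 'I_n := Ordinal n_gt0.
have negD' i : i != i0 -> (P *m toQ G *m P^T) i i < 0.
  by move=> ne; apply: (negD i).2; apply: contra ne => /eqP i_0; apply/eqP/val_inj.
have symQ : (toQ G)^T = toQ G by rewrite map_trmx symG.
have hhQ_gt0 : 0 < mxform (toQ G) (toQ h) (toQ h) by rewrite -bform_ratE ltr0z.
have vhQ0 : mxform (toQ G) (toQ v) (toQ h) = 0 by rewrite -bform_ratE vh0.
have [vv_le0 vv_eq0] := hodge_index symQ unitP diagD negD' hhQ_gt0 vhQ0.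
split; first by rewrite -(lerz0 rat) bform_ratE.
move=> vv0; have vQ0 : toQ v = 0 by apply: vv_eq0; rewrite -bform_ratE vv0.
apply/rowP => j; have /eqP := congr1 (fun w : 'rV[rat]_n => w 0 j) vQ0.
by rewrite !mxE intr_eq0 => /eqP.
Qed.

Lemma hodge_ineq v : bform G v v * bform G h h <= bform G v h ^+ 2.
Proof.
set H := bform G h h; set B := bform G v h.
have H_gt0 : 0 < H := polarized_gt0.
set y := H *: v - B *: h.
have yh0 : bform G y h = 0 by rewrite bformE mxformBl !mxformZl -bformE mulrC subrr.
have [+ _] := polarized_hodge_index yh0.
have -> : bform G y y = H * (H * bform G v v - B ^+ 2).
  rewrite bformE mxform_sqrB // !(mxformZl, mxformZr) -bformE -/H -/B; ring.
by rewrite pmulr_rle0 // subr_le0 mulrC.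
Qed.

Lemma root_dot_ge_N1 k a b : is_root G h k a -> is_root G h k b -> a <> b ->
  -1 <= bform G a b.
Proof.
move=> [aa ah] [bb bh] neq_ab; rewrite leNgt; apply/negP => lt.
have /polarized_hodge_index[d_le0 d_eq0] : bform G (a - b) h = 0.
  by rewrite bformE mxformBl -bformE ah bh subrr.
apply: neq_ab; apply/eqP; rewrite -subr_eq0; apply/eqP/d_eq0.
by apply/eqP; rewrite eq_le d_le0 bformE mxform_sqrB // -bformE aa bb; lia.
Qed.

Lemma root_sub_root0 k a b : is_root G h k a -> is_root G h k b ->
  bform G a b = -1 -> is_root G h 0 (a - b).
Proof.
move=> [aa ah] [bb bh] ab.
by split; rewrite bformE ?mxform_sqrB ?mxformBl // -bformE ?aa ?bb ?ab ?ah ?bh; lia.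
Qed.

Lemma root_add_isotropic k1 k2 a b : is_root G h k1 a -> is_root G h k2 b ->
  bform G a b = 2 -> isotropic G h (k1 + k2) (a + b).
Proof.
move=> [aa ah] [bb bh] ab.
by split; rewrite bformE ?mxform_sqrD ?mxformDl // -bformE ?aa ?bb ?ab ?ah ?bh; lia.
Qed.

Lemma root_dot_le2 k1 k2 a b : is_root G h k1 a -> is_root G h k2 b ->
  (k1 + k2) ^+ 2 < 2 * bform G h h -> bform G a b <= 2.
Proof.
move=> [aa ah] [bb bh] small.
have := hodge_ineq (a + b).
rewrite bformE mxform_sqrD // mxformDl -!bformE aa bb ah bh.
have := polarized_gt0; nia.
Qed.

End PolarizedLattice.

Section WeylChamber.

Variables (n : nat) (G : 'M[int]_n) (h : 'rV[int]_n) (rho : 'rV[rat]_n).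
Hypotheses (polGh : polarized G h) (chamber : weyl_chamber G h rho).

Let symG := polarized_sym polGh.

Lemma root0_pos_or_neg r : is_root G h 0 r -> pos_root G h rho r \/ pos_root G h rho (- r).
Proof.
move=> rt_r; have [rr rh] := rt_r.
have rt_Nr : is_root G h 0 (- r).
  by split; rewrite -scaleN1r bformE !(mxformZl, mxformZr) -bformE ?rr ?rh; lia.
case: (ltgtP (bformQ G rho r) 0) => [r_lt0|r_gt0|r_eq0]; [right|left|].
- by split; rewrite // bformQNr oppr_gt0.
- by [].
- by have := chamber rt_r; rewrite r_eq0 eqxx.
Qed.

Lemma root_sub_pos k a b : is_root G h k a -> is_root G h k b -> bform G a b = -1 ->
  pos_root G h rho (a - b) \/ pos_root G h rho (b - a).
Proof.
move=> rt_a rt_b ab; rewrite -[b - a]opprB; apply: root0_pos_or_neg.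
exact: (root_sub_root0 polGh rt_a rt_b ab).
Qed.

Lemma exceptional_not_add e a b : exceptional G h rho e ->
  pos_root G h rho a -> pos_root G h rho b -> e <> a + b.
Proof.
move=> [_ [x [xe0 x_gt0]]] pos_a pos_b e_ab.
have a_neq_e : a <> e.
  by move=> a_e; move: pos_b.2 (bformQDr G rho a b); rewrite -e_ab a_e; lra.
have b_neq_e : b <> e.
  by move=> b_e; move: pos_a.2 (bformQDr G rho a b); rewrite -e_ab b_e; lra.
have := x_gt0 a pos_a a_neq_e; have := x_gt0 b pos_b b_neq_e.
by move: xe0; rewrite e_ab bformQDr; lra.
Qed.

Lemma pos_root_dot_le1 a b : pos_root G h rho a -> pos_root G h rho b -> bform G a b <= 1.
Proof.
move=> [rt_a a_gt0] [rt_b b_gt0].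
have ab_le2 : bform G a b <= 2.
  by apply: (root_dot_le2 polGh rt_a rt_b); have := polarized_gt0 polGh; lia.
suff : bform G a b != 2 by lia.
apply/eqP => /(root_add_isotropic polGh rt_a rt_b)[ab_sqr ab_h].
have [_ /(_ ab_sqr) ab0] := polarized_hodge_index polGh ab_h.
by move: b_gt0; rewrite -(addKr a b) ab0 addr0 bformQNr; lra.
Qed.

(* If r is not a sum of two positive roots, then rho + (rho.r / 2) r lies on
   the wall r^perp and is positive on every other positive root. *)
Lemma exceptional_or_add r : pos_root G h rho r ->
  exceptional G h rho r \/ exists2 a, pos_root G h rho a & pos_root G h rho (r - a).
Proof.
move=> pos_r; have [rt_r c_gt0] := pos_r; have [rr _] := rt_r.
case: (classic (exists2 a, pos_root G h rho a & pos_root G h rho (r - a))) => [|no_split].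
  by right.
left; split => //; set c := bformQ G rho r in c_gt0 *.
exists (rho + (c / 2) *: toQ r); split; first by rewrite bformQ_shift rr -/c; lra.
move=> r' pos_r' neq_r'; have [rt_r' _] := pos_r'; rewrite bformQ_shift.
have := root_dot_ge_N1 polGh rt_r rt_r' (nesym neq_r').
rewrite le_eqVlt => /predU1P[rr'|rr'_gt].
- have [pos_d|[_]] := root_sub_pos rt_r rt_r' (esym rr').
    by case: no_split; exists r'.
  by rewrite bformQBr -rr' -/c; lra.
- have rr'_ge0 : (0 : rat) <= (bform G r r')%:~R by rewrite ler0z; lia.
  have := pos_r'.2; nra.
Qed.

Lemma pos_root_dot_ge0 l : (forall e, exceptional G h rho e -> 0 <= bform G l e) ->
  forall r, pos_root G h rho r -> 0 <= bform G l r.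
Proof.
move=> l_exc r pos_r; have r_gt0 := pos_r.2; move: r r_gt0 pos_r.
apply: (bformQ_pos_ind (P := fun r => pos_root G h rho r -> 0 <= bform G l r)).
move=> r _ IH pos_r; case: (exceptional_or_add pos_r) => [/l_exc //|[a pos_a pos_ra]].
have [_ a_gt0] := pos_a; have [_] := pos_ra; rewrite bformQBr => ra_gt0.
rewrite -(subrK a r) bformE mxformDr -bformE addr_ge0 //.
- by apply: IH => //; rewrite bformQBr; apply/andP; split; lra.
- by apply: IH => //; apply/andP; split; lra.
Qed.

Lemma lines_dot_neqN1 l1 l2 : is_line G h rho l1 -> is_line G h rho l2 ->
  bform G l1 l2 != -1.
Proof.
move=> [rt1 l1_ge0] [rt2 l2_ge0]; have [l1l1 _] := rt1; have [l2l2 _] := rt2.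
apply/eqP => l1l2; case: (root_sub_pos rt1 rt2 l1l2).
- move/(pos_root_dot_ge0 l1_ge0).
  by rewrite bformE mxformBr -bformE l1l1 l1l2.
- move/(pos_root_dot_ge0 l2_ge0).
  by rewrite bformE mxformBr (mxformC symG l2 l1) -bformE l2l2 l1l2.
Qed.

Lemma exceptionals_dot_neqN1 e1 e2 : exceptional G h rho e1 -> exceptional G h rho e2 ->
  bform G e1 e2 != -1.
Proof.
move=> ex1 ex2; have [[rt1 _] _] := ex1; have [[rt2 _] _] := ex2.
apply/eqP => e1e2; case: (root_sub_pos rt1 rt2 e1e2) => pos_d.
- by apply: (exceptional_not_add ex1 ex2.1 pos_d); rewrite addrC subrK.
- by apply: (exceptional_not_add ex2 ex1.1 pos_d); rewrite addrC subrK.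
Qed.

End WeylChamber.

Theorem lemma2p12 (n : nat) (G : 'M[int]_n) (h : 'rV[int]_n)
  (rho : 'rV[rat]_n) (e1 e2 l1 l2 : 'rV[int]_n) :
  polarized G h -> weyl_chamber G h rho ->
  exceptional G h rho e1 -> exceptional G h rho e2 -> e1 <> e2 ->
  is_line G h rho l1 -> is_line G h rho l2 -> l1 <> l2 ->
  (two_admissible G h -> bform G l1 l2 = 0 \/ bform G l1 l2 = 1) /\
  (one_admissible G h -> bform G l1 e1 = 0 \/ bform G l1 e1 = 1) /\
  (bform G e1 e2 = 0 \/ bform G e1 e2 = 1).
Proof.
move=> polGh chamber ex1 ex2 e12 ln1 ln2 l12.
have [[rt_e1 _] _] := ex1; have [[rt_e2 _] _] := ex2.
have [rt_l1 l1_exc] := ln1; have [rt_l2 _] := ln2.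
have H_gt0 := polarized_gt0 polGh.
split; last split.
- case=> H_ge4 no_iso.
  have := root_dot_ge_N1 polGh rt_l1 rt_l2 l12.
  have := lines_dot_neqN1 polGh chamber ln1 ln2.
  have : bform G l1 l2 <= 2 by apply: (root_dot_le2 polGh rt_l1 rt_l2); lia.
  have : bform G l1 l2 != 2.
    by apply/eqP => /(root_add_isotropic polGh rt_l1 rt_l2); case: (no_iso (l1 + l2)).
  lia.
- move=> no_iso; have := l1_exc e1 ex1.
  have : bform G l1 e1 <= 2 by apply: (root_dot_le2 polGh rt_l1 rt_e1); lia.
  have : bform G l1 e1 != 2.
    by apply/eqP => /(root_add_isotropic polGh rt_l1 rt_e1); rewrite addr0; apply: no_iso.
  lia.
- have := root_dot_ge_N1 polGh rt_e1 rt_e2 e12.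
  have := exceptionals_dot_neqN1 polGh chamber ex1 ex2.
  have := pos_root_dot_le1 polGh ex1.1 ex2.1.
  lia.
Qed.
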